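(* Let $\mathcal{P}$ be an arbitrary LS-packing of $n>1$ unit diameter disks in $\mathbb{E}^2$. Then $c(\mathcal{P})\leq\lfloor 2n-2\sqrt{n}\rfloor$.
   Context: A packing of disks in $\mathbb{E}^2$ is a family of disks with pairwise disjoint interiors. A packing is totally separable (a TS-packing) if any two of its disks can be separated by a line that is disjoint from the interior of every disk of the packing. A packing $\mathcal{P}$ is locally separable (an LS-packing) if each disk of $\mathcal{P}$ together with the disks of $\mathcal{P}$ tangent to it form a TS-packing. The contact number $c(\mathcal{P})$ is the number of unordered pairs of disks of $\mathcal{P}$ tangent to each other. *)

From HB Require Import structures.
From mathcomp Require Import all_boot all_order all_algebra.
From mathcomp Require Import reals.
Set Implicit Arguments. Unset Strict Implicit. Unset Printing Implicit Defensive.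
Import Order.TTheory GRing.Theory Num.Theory.
Local Open Scope ring_scope.

Section Disks.
Variable R : realType.

Definition sqdist (p q : R * R) : R := (p.1 - q.1) ^+ 2 + (p.2 - q.2) ^+ 2.

Definition cdisk (c : R * R) (r : R) (p : R * R) : Prop := sqdist p c <= r ^+ 2.
Definition odisk (c : R * R) (r : R) (p : R * R) : Prop := sqdist p c < r ^+ 2.

(* unit diameter disks: radius 1/2 *)
Definition rad : R := 1 / 2.

Definition lin (a1 a2 b : R) (p : R * R) : R := a1 * p.1 + a2 * p.2 - b.

(* A family of n unit-diameter disks, given by their centers c i, i < n. *)
Variable n : nat.
Implicit Type c : 'I_n -> R * R.

Definition is_packing c : Prop :=
  forall i j : 'I_n, i != j -> forall p, ~ (odisk (c i) rad p /\ odisk (c j) rad p).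

Definition totally_separable c (F : pred 'I_n) : Prop :=
  forall i j : 'I_n, F i -> F j -> i != j ->
  exists a1 a2 b : R, (a1, a2) != (0, 0) /\
    (forall k, F k -> forall p, odisk (c k) rad p -> lin a1 a2 b p != 0) /\
    (((forall p, cdisk (c i) rad p -> lin a1 a2 b p <= 0) /\
      (forall p, cdisk (c j) rad p -> lin a1 a2 b p >= 0)) \/
     ((forall p, cdisk (c i) rad p -> lin a1 a2 b p >= 0) /\
      (forall p, cdisk (c j) rad p -> lin a1 a2 b p <= 0))).

(* two (distinct) disks of radius 1/2 are tangent iff their centers are at distance 1 *)
Definition tangent c (i j : 'I_n) : bool := (i != j) && (sqdist (c i) (c j) == 1).

Definition TS_packing c : Prop := is_packing c /\ totally_separable c predT.

Definition LS_packing c : Prop :=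
  is_packing c /\
  forall i : 'I_n, totally_separable c (fun k => (k == i) || tangent c i k).

Definition contact_number c : nat :=
  #|[set ij : 'I_n * 'I_n | (ij.1 < ij.2)%N && tangent c ij.1 ij.2]|.

End Disks.

From Pilot Require Import Defs.
From HB Require Import structures.
From mathcomp Require Import all_boot all_order all_algebra.
From mathcomp Require Import reals.
From mathcomp Require Import ring lra zify.
Import Order.TTheory GRing.Theory Num.Theory.
Set Implicit Arguments. Unset Strict Implicit. Unset Printing Implicit Defensive.
Local Open Scope ring_scope.

(* In an LS-packing, two disks tangent to a common disk D are seen from the
   centre of D under an angle of at least pi/2: a line separating D from one of
   them is their common tangent line, and the other one must avoid it.
   Orient every contact into one of two half-open quarter-turn sectors.  Within
   one sector the contacts form vertex-disjoint directed paths (every disk has at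
   most one successor and one predecessor, and a linear functional increases
   along them), so a sector whose contact graph has a_k paths carries n - a_k
   contacts, and c <= 2n - a_0 - a_1.  A disk is determined by the starting
   disks of its two paths, because the cones spanned by the two sectors meet
   only in 0; hence n <= a_0 a_1, and a_0 + a_1 >= 2 sqrt n. *)

Section PathCovers.
Variable T : finType.
Implicit Types (e : rel T) (x y z s v w : T).

Definition source e s : bool := [forall u, ~~ e u s].

Lemma card_edges_add_sources e :
  (forall x y z, e x z -> e y z -> x = y) ->
  (#|[set xy : T * T | e xy.1 xy.2]| + #|[set s | source e s]| <= #|T|)%N.
Proof.
move=> e_inj.
have snd_inj : {in [set xy : T * T | e xy.1 xy.2] &, injective snd}.
  move=> [x z] [y z'] /[!inE] /= exz eyz' ezz'; rewrite -ezz' in eyz'.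
  by rewrite (e_inj _ _ _ exz eyz') ezz'.
rewrite -(card_in_imset snd_inj) -(cardsC [set s | source e s]) addnC leq_add2l.
apply/subset_leq_card/subsetP => _ /imsetP [[x z] + ->].
by rewrite !inE /source negb_forall => exz; apply/existsP; exists x; rewrite negbK.
Qed.

Lemma connect_functional_total e :
  (forall x y z, e x y -> e x z -> y = z) ->
  forall s v w, connect e s v -> connect e s w -> connect e v w || connect e w v.
Proof.
move=> e_fun s v w /connectP [p] + ->; elim: p s => [|x p IH] s /=.
  by move=> _ ->.
case/andP=> esx px /connectP [[|y q] /=].
  move=> _ ->; apply/orP; right; apply/connectP; exists (x :: p) => //=.
  by rewrite esx.
case/andP=> /(e_fun _ _ _ esx) <- xq wE.
by apply: IH px _; apply/connectP; exists q.
Qed.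

Lemma connect_diff_closed (V : zmodType) e (phi : T -> V) (K : pred V) :
  0 \in K -> {in K &, forall u u', u + u' \in K} ->
  (forall x y, e x y -> phi y - phi x \in K) ->
  forall x y, connect e x y -> phi y - phi x \in K.
Proof.
move=> K0 KD eK x y /connectP [p]; elim: p x => [|z p IH] x /=.
  by move=> _ ->; rewrite subrr.
case/andP=> exz pz yE.
by rewrite -[phi y](subrK (phi z)) -addrA KD ?(IH z) ?eK.
Qed.

Definition source_of e v : T := odflt v [pick s | source e s && connect e s v].

Section Sources.
Context {e : rel T} {d : Order.disp_t} {D : orderType d} {f : T -> D}.
Hypothesis f_incr : forall x y, e x y -> (f x < f y)%O.

Lemma exists_source v : exists2 s, source e s & connect e s v.
Proof.
case: (arg_minP (P := connect e ^~ v) f (connect0 e v)) => s esv s_min.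
exists s => //; rewrite /source; apply/forallP => u; apply/negP => eus.
have := s_min u (connect_trans (connect1 eus) esv).
by rewrite leNgt f_incr.
Qed.

Lemma source_ofP v : source e (source_of e v) && connect e (source_of e v) v.
Proof.
rewrite /source_of; case: pickP => [//|none].
by have [s es esv] := exists_source v; have := none s; rewrite es esv.
Qed.

End Sources.

Lemma card_le_mul_sources e1 e2 (d : Order.disp_t) (D : orderType d) (f1 f2 : T -> D) :
  (forall x y z, e1 x y -> e1 x z -> y = z) ->
  (forall x y z, e2 x y -> e2 x z -> y = z) ->
  (forall x y, e1 x y -> (f1 x < f1 y)%O) ->
  (forall x y, e2 x y -> (f2 x < f2 y)%O) ->
  (forall v w, connect e1 v w || connect e1 w v ->
               connect e2 v w || connect e2 w v -> v = w) ->
  (#|T| <= #|[set s | source e1 s]| * #|[set s | source e2 s]|)%N.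
Proof.
move=> e1_fun e2_fun f1_incr f2_incr comparable_eq.
pose F v := (source_of e1 v, source_of e2 v).
have F_inj : injective F.
  move=> v w [s1E s2E]; apply: comparable_eq.
    case/andP: (source_ofP f1_incr v) (source_ofP f1_incr w) => _ + /andP [_].
    by rewrite s1E; apply: connect_functional_total.
  case/andP: (source_ofP f2_incr v) (source_ofP f2_incr w) => _ + /andP [_].
  by rewrite s2E; apply: connect_functional_total.
rewrite -cardsX -cardsT -(card_imset _ F_inj); apply/subset_leq_card/subsetP.
move=> _ /imsetP [v _ ->]; rewrite !inE /=.
by case/andP: (source_ofP f1_incr v) => -> _; case/andP: (source_ofP f2_incr v).
Qed.

End PathCovers.

Section PlaneGeometry.
Context {R : realType}.
Implicit Types (r : R) (p u v x y z : R * R).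

Definition dotp u v : R := u.1 * v.1 + u.2 * v.2.

Lemma dotpNN u v : dotp (- u) (- v) = dotp u v.
Proof. by rewrite /dotp /=; ring. Qed.

Lemma sqdistC p q : sqdist p q = sqdist q p.
Proof. by rewrite /sqdist; ring. Qed.

Lemma linN a1 a2 b p : lin (- a1) (- a2) (- b) p = - lin a1 a2 b p.
Proof. by rewrite /lin; ring. Qed.

Lemma sqdistE p q : sqdist p q = dotp (p - q) (p - q).
Proof. by rewrite /sqdist /dotp !expr2. Qed.

Lemma dotp_ge_sqr_eq u v : dotp u u = dotp v v -> dotp u u <= dotp u v -> u = v.
Proof.
case: u v => [u1 u2] [v1 v2]; rewrite /dotp /= => uv le_uv.
have : (u1 - v1) ^+ 2 + (u2 - v2) ^+ 2 <= 0 by lra.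
rewrite le_eqVlt ltNge addr_ge0 ?sqr_ge0 // orbF paddr_eq0 ?sqr_ge0 //.
by rewrite !sqrf_eq0 !subr_eq0 => /andP [/eqP -> /eqP ->].
Qed.

Lemma dotp_gt0 u : u != 0 -> 0 < dotp u u.
Proof.
case: u => [u1 u2]; rewrite /dotp /= -!expr2 lt_def addr_ge0 ?sqr_ge0 // andbT.
apply: contraNneq => /eqP; rewrite paddr_eq0 ?sqr_ge0 // !sqrf_eq0.
by case/andP=> /eqP -> /eqP ->.
Qed.

Lemma halfplane_support {r x a1 a2 b} :
  (a1, a2) != (0, 0) -> (forall p, cdisk x r p -> lin a1 a2 b p <= 0) ->
  lin a1 a2 b x + r * Num.sqrt (a1 ^+ 2 + a2 ^+ 2) <= 0.
Proof.
case: x => [x1 x2]; rewrite /cdisk /sqdist /lin /= => a_neq0 Hx.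
have a_gt0 : 0 < a1 ^+ 2 + a2 ^+ 2 by rewrite !expr2; exact: dotp_gt0 a_neq0.
set N := Num.sqrt (a1 ^+ 2 + a2 ^+ 2).
have N2 : N ^+ 2 = a1 ^+ 2 + a2 ^+ 2 by rewrite sqr_sqrtr // ltW.
set t := r / N.
have tN : t * N = r by rewrite /t mulfVK // gt_eqF ?sqrtr_gt0.
have := Hx (x1 + t * a1, x2 + t * a2); rewrite /=.
have -> : (x1 + t * a1 - x1) ^+ 2 + (x2 + t * a2 - x2) ^+ 2 = r ^+ 2.
  by rewrite -tN exprMn N2; ring.
rewrite lexx => /(_ isT).
have -> : r * N = t * (a1 ^+ 2 + a2 ^+ 2) by rewrite -N2 -tN; ring.
lra.
Qed.

Lemma cauchy_schwarz_equality a u :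
  dotp a a * dotp u u <= dotp a u ^+ 2 -> a.1 * u.2 = a.2 * u.1.
Proof.
rewrite /dotp => cs; apply/eqP; rewrite -subr_eq0 -sqrf_eq0 eq_le sqr_ge0 andbT.
have -> : (a.1 * u.2 - a.2 * u.1) ^+ 2
    = (a.1 * a.1 + a.2 * a.2) * (u.1 * u.1 + u.2 * u.2) - (a.1 * u.1 + a.2 * u.2) ^+ 2.
  by ring.
by rewrite subr_le0.
Qed.

Lemma separator_through_contact {r x y a1 a2 b} :
  sqdist y x = (2 * r) ^+ 2 ->
  (forall p, cdisk x r p -> lin a1 a2 b p <= 0) ->
  (forall p, cdisk y r p -> lin a1 a2 b p >= 0) ->
  lin a1 a2 b ((x.1 + y.1) / 2, (x.2 + y.2) / 2) = 0.
Proof.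
case: x y => [x1 x2] [y1 y2]; rewrite /cdisk /sqdist /= => hu Hx Hy.
have dist_x : ((x1 + y1) / 2 - x1) ^+ 2 + ((x2 + y2) / 2 - x2) ^+ 2 = r ^+ 2.
  have -> : ((x1 + y1) / 2 - x1) ^+ 2 + ((x2 + y2) / 2 - x2) ^+ 2
      = ((y1 - x1) ^+ 2 + (y2 - x2) ^+ 2) / 4 by field.
  by rewrite hu; field.
have dist_y : ((x1 + y1) / 2 - y1) ^+ 2 + ((x2 + y2) / 2 - y2) ^+ 2 = r ^+ 2.
  by rewrite -dist_x; field.
by apply/eqP; rewrite eq_le Hx ?Hy //= ?dist_x ?dist_y.
Qed.

(* Both disks touch the line, so its normal (a1, a2) is a positive multiple of
   y - x (equality in Cauchy-Schwarz) and it passes through the tangency point. *)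
Lemma tangent_separator_bisector {r x y a1 a2 b} :
  0 < r -> sqdist y x = (2 * r) ^+ 2 -> (a1, a2) != (0, 0) ->
  (forall p, cdisk x r p -> lin a1 a2 b p <= 0) ->
  (forall p, cdisk y r p -> lin a1 a2 b p >= 0) ->
  forall p, (lin a1 a2 b p == 0) = (2 * dotp (y - x) (p - x) == sqdist y x).
Proof.
move=> r_gt0 hu a_neq0 Hx Hy.
have mid := separator_through_contact hu Hx Hy.
have far_x := halfplane_support a_neq0 Hx.
have far_y : lin (- a1) (- a2) (- b) y + r * Num.sqrt ((- a1) ^+ 2 + (- a2) ^+ 2) <= 0.
  apply: halfplane_support; first by rewrite xpair_eqE !oppr_eq0 -xpair_eqE.
  by move=> p /Hy; rewrite linN oppr_le0.
have := @cauchy_schwarz_equality (a1, a2) (y - x).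
move: mid far_x far_y hu; rewrite !sqrrN linN.
set N := Num.sqrt _; have N_ge0 : 0 <= N by exact: sqrtr_ge0.
have N2 : N ^+ 2 = a1 ^+ 2 + a2 ^+ 2 by rewrite sqr_sqrtr // addr_ge0 ?sqr_ge0.
case: x y {Hx Hy} => [x1 x2] [y1 y2]; rewrite /sqdist /lin /dotp /=.
have [u1 ->] : exists u1 : R, y1 = x1 + u1 by exists (y1 - x1); ring.
have [u2 ->] : exists u2 : R, y2 = x2 + u2 by exists (y2 - x2); ring.
have -> : x1 + u1 - x1 = u1 by ring.
have -> : x2 + u2 - x2 = u2 by ring.
move=> mid far_x far_y hu parallel [p1 p2] /=.
have au_ge : 2 * r * N <= a1 * u1 + a2 * u2 by lra.
have cross0 : a1 * u2 - a2 * u1 = 0.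
  rewrite parallel ?subrr // -!expr2 hu -N2.
  have : 0 <= 2 * r * N by rewrite !mulr_ge0 // ltW.
  nra.
have lin_bisector : (u1 ^+ 2 + u2 ^+ 2) * (a1 * p1 + a2 * p2 - b)
    = (a1 * u1 + a2 * u2) / 2 * (2 * (u1 * (p1 - x1) + u2 * (p2 - x2)) - (u1 ^+ 2 + u2 ^+ 2))
      + (a1 * u2 - a2 * u1) * (u2 * (p1 - x1) - u1 * (p2 - x2)).
  have -> : b = a1 * ((x1 + (x1 + u1)) / 2) + a2 * ((x2 + (x2 + u2)) / 2) by lra.
  by field.
have u_gt0 : 0 < u1 ^+ 2 + u2 ^+ 2 by rewrite hu exprn_gt0 ?mulr_gt0.
have au_gt0 : 0 < (a1 * u1 + a2 * u2) / 2.
  have N_gt0 : 0 < N by rewrite sqrtr_gt0 !expr2; exact: dotp_gt0 a_neq0.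
  by rewrite divr_gt0 //; apply: lt_le_trans au_ge; rewrite !mulr_gt0.
rewrite -(inj_eq (mulfI (lt0r_neq0 u_gt0))) mulr0 lin_bisector cross0 mul0r addr0.
by rewrite mulf_eq0 (negPf (lt0r_neq0 au_gt0)) subr_eq0.
Qed.

Lemma bisector_avoiding_disk {r x y z} :
  0 < r -> sqdist y x = (2 * r) ^+ 2 -> sqdist z x = (2 * r) ^+ 2 ->
  (forall p, odisk z r p -> 2 * dotp (y - x) (p - x) != sqdist y x) ->
  dotp (y - x) (z - x) <= 0 \/ z = y.
Proof.
move=> r_gt0 hy hz avoid.
have [s_le0|s_gt0] := lerP (dotp (y - x) (z - x)) 0; first by left.
have [s_ge|s_lt] := lerP ((2 * r) ^+ 2) (dotp (y - x) (z - x)).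
  right; apply: (addIr (- x)); apply/esym/dotp_ge_sqr_eq; rewrite -!sqdistE ?hy //.
exfalso; move: s_gt0 s_lt avoid hy hz; rewrite /odisk /sqdist /dotp.
case: x y z => [x1 x2] [y1 y2] [z1 z2] /=.
have [u1 ->] : exists u1 : R, y1 = x1 + u1 by exists (y1 - x1); ring.
have [u2 ->] : exists u2 : R, y2 = x2 + u2 by exists (y2 - x2); ring.
have -> : x1 + u1 - x1 = u1 by ring.
have -> : x2 + u2 - x2 = u2 by ring.
set s := _ + _ => s_gt0 s_lt avoid hu _.
(* the foot of the perpendicular from z to the bisector lies in the open disk around z *)
set k := (s - 2 * r ^+ 2) / (2 * r) ^+ 2.
have r2_gt0 : 0 < (2 * r) ^+ 2 by rewrite exprn_gt0 ?mulr_gt0.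
have hk : k * (2 * r) ^+ 2 = s - 2 * r ^+ 2 by rewrite /k mulfVK ?lt0r_neq0.
have p_in : (z1 - k * u1 - z1) ^+ 2 + (z2 - k * u2 - z2) ^+ 2 < r ^+ 2.
  have -> : (z1 - k * u1 - z1) ^+ 2 + (z2 - k * u2 - z2) ^+ 2
      = (s - 2 * r ^+ 2) ^+ 2 / (2 * r) ^+ 2.
    by rewrite -hk -hu; field; rewrite hu lt0r_neq0.
  rewrite ltr_pdivrMr //.
  have : 0 < s * ((2 * r) ^+ 2 - s) by rewrite mulr_gt0 // subr_gt0.
  nra.
move/eqP: (avoid (z1 - k * u1, z2 - k * u2) p_in); apply.
have -> : 2 * (u1 * (z1 - k * u1 - x1) + u2 * (z2 - k * u2 - x2))
    = 2 * (s - k * (u1 ^+ 2 + u2 ^+ 2)) by rewrite /s; ring.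
by rewrite hu hk; ring.
Qed.

Lemma dotpBr u v w : dotp u (v - w) = dotp u v - dotp u w.
Proof. by rewrite /dotp /=; ring. Qed.

(* Directions in [-pi/4, pi/4) and in [pi/4, 3pi/4): with their opposites,
   these two half-open quarter-turn sectors partition the nonzero vectors. *)
Definition sector0 u : bool := (u.2 < u.1) && (- u.1 <= u.2).
Definition sector1 u : bool := (u.1 <= u.2) && (- u.1 < u.2).

Lemma sector0_dot_gt0 u v : sector0 u -> sector0 v -> 0 < dotp u v.
Proof. by rewrite /dotp => /andP [? ?] /andP [? ?]; nra. Qed.

Lemma sector1_dot_gt0 u v : sector1 u -> sector1 v -> 0 < dotp u v.
Proof. by rewrite /dotp => /andP [? ?] /andP [? ?]; nra. Qed.

Lemma sector0_e1_gt0 u : sector0 u -> 0 < dotp (1, 0) u.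
Proof. by rewrite /dotp => /andP [? ?] /=; lra. Qed.

Lemma sector1_e2_gt0 u : sector1 u -> 0 < dotp (0, 1) u.
Proof. by rewrite /dotp => /andP [? ?] /=; lra. Qed.

Lemma sector0D u v : sector0 u -> sector0 v -> sector0 (u + v).
Proof. by rewrite /sector0 /= => /andP [? ?] /andP [? ?]; apply/andP; split; lra. Qed.

Lemma sector1D u v : sector1 u -> sector1 v -> sector1 (u + v).
Proof. by rewrite /sector1 /= => /andP [? ?] /andP [? ?]; apply/andP; split; lra. Qed.

Lemma sectors_cover u : u != 0 -> [|| sector0 u, sector1 u, sector0 (- u) | sector1 (- u)].
Proof.
case: u => [u1 u2]; rewrite /sector0 /sector1 /= xpair_eqE negb_and => u_neq0.
apply/or4P; have [lt21|le12] := ltrP u2 u1.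
  have [le_sum|lt_sum] := lerP (- u1) u2.
    by apply: Or41; apply/andP.
  by apply: Or44; apply/andP; split; lra.
have [lt_sum|le_sum] := ltrP (- u1) u2.
  by apply: Or42; apply/andP.
have [lt12|eq12] := ltrP u1 u2.
  by apply: Or43; apply/andP; split; lra.
have u12 : u1 = u2 by lra.
have u1_neq0 : u1 != 0 by case/orP: u_neq0; rewrite -?u12.
have u1_lt0 : u1 < 0 by rewrite lt_neqAle u1_neq0 /=; lra.
by apply: Or44; apply/andP; split; lra.
Qed.

Lemma sector_cones_meet u :
  [|| sector0 u, u == 0 | sector0 (- u)] -> [|| sector1 u, u == 0 | sector1 (- u)] -> u = 0.
Proof.
case: u => [u1 u2]; rewrite /sector0 /sector1 /= xpair_eqE.
by case/or3P => [/andP [? ?]|/andP [/eqP -> /eqP ->] //|/andP [? ?]];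
  case/or3P => [/andP [? ?]|/andP [/eqP -> /eqP ->] //|/andP [? ?]]; exfalso; lra.
Qed.
End PlaneGeometry.

Section LocallySeparablePacking.
Variables (R : realType) (n : nat) (c : 'I_n -> R * R).
Hypothesis LS : LS_packing c.
(* all_algebra exports another [rad], the radical of a sesquilinear form. *)
Local Notation rad := (Defs.rad R).

Lemma two_rad : 2 * rad = 1.
Proof. by rewrite /rad; field. Qed.

Lemma rad_gt0 : 0 < rad.
Proof. by rewrite /rad divr_gt0. Qed.

Lemma tangentC i j : tangent c i j = tangent c j i.
Proof. by rewrite /tangent eq_sym sqdistC. Qed.

Lemma tangent_sqdist i j : tangent c i j -> sqdist (c j) (c i) = (2 * rad) ^+ 2.
Proof. by rewrite tangentC two_rad expr1n => /andP [_ /eqP]. Qed.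

Lemma LS_center_inj : injective c.
Proof.
move=> i j cij; have [//|ij] := eqVneq i j; case: LS => pack _; exfalso.
apply: (pack i j ij (c i)); rewrite /odisk -cij /sqdist !subrr expr2 mul0r addr0.
by split; rewrite exprn_gt0 // rad_gt0.
Qed.

Lemma LS_contact_dot_le0 i j k :
  tangent c i j -> tangent c i k -> j != k -> dotp (c j - c i) (c k - c i) <= 0.
Proof.
move=> tij tik jk; have [_ /(_ i) TS] := LS.
have nbr l : tangent c i l -> (l == i) || tangent c i l by move=> ->; rewrite orbT.
have ij : i != j by case/andP: tij.
have Fi : (i == i) || tangent c i i by rewrite eqxx.
have [a1 [a2 [b [a_neq0 [avoid sep]]]]] := TS i j Fi (nbr _ tij) ij.
have bisector p :
    (lin a1 a2 b p == 0) = (2 * dotp (c j - c i) (p - c i) == sqdist (c j) (c i)).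
  case: sep => [[Hi Hj]|[Hi Hj]].
    exact: tangent_separator_bisector rad_gt0 (tangent_sqdist tij) a_neq0 Hi Hj p.
  rewrite -oppr_eq0 -linN; apply: tangent_separator_bisector rad_gt0 (tangent_sqdist tij) _ _ _ p.
  - by rewrite xpair_eqE !oppr_eq0 -xpair_eqE.
  - by move=> q /Hi; rewrite linN oppr_le0.
  - by move=> q /Hj; rewrite linN oppr_ge0.
case: (bisector_avoiding_disk rad_gt0 (tangent_sqdist tij) (tangent_sqdist tik)) => //.
  by move=> p /(avoid k (nbr _ tik)); rewrite bisector.
by move/LS_center_inj => kj; rewrite kj eqxx in jk.
Qed.

Definition contact_in (S : pred (R * R)) i j : bool := tangent c i j && S (c j - c i).

Section Sector.
Variables (S : pred (R * R)) (l : R * R).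
Hypothesis S_dot_gt0 : forall u v, S u -> S v -> 0 < dotp u v.

Lemma contact_in_functional i j k : contact_in S i j -> contact_in S i k -> j = k.
Proof.
move=> /andP [tij Sj] /andP [tik Sk]; apply/eqP; apply: contraT => jk.
by have := LS_contact_dot_le0 tij tik jk; rewrite leNgt S_dot_gt0.
Qed.

Lemma contact_in_injective i j k : contact_in S i k -> contact_in S j k -> i = j.
Proof.
rewrite /contact_in tangentC [tangent c j k]tangentC.
move=> /andP [tki Si] /andP [tkj Sj]; apply/eqP; apply: contraT => ij.
have := LS_contact_dot_le0 tki tkj ij.
by rewrite -dotpNN !opprB leNgt S_dot_gt0.
Qed.

Hypothesis S_l_gt0 : forall u, S u -> 0 < dotp l u.

Lemma contact_in_incr i j : contact_in S i j -> dotp l (c i) < dotp l (c j).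
Proof. by case/andP=> _ /S_l_gt0; rewrite dotpBr subr_gt0. Qed.

Hypothesis SD : forall u v, S u -> S v -> S (u + v).

Lemma connect_contact_in_cone i j :
  connect (contact_in S) i j || connect (contact_in S) j i ->
  [|| S (c i - c j), c i - c j == 0 | S (- (c i - c j))].
Proof.
have cone h k : connect (contact_in S) h k -> S (c k - c h) || (c k - c h == 0).
  apply: (connect_diff_closed (K := [pred u | S u || (u == 0)])).
  - by rewrite inE eqxx orbT.
  - move=> u v; rewrite !inE => /orP [Su|/eqP ->] /orP [Sv|/eqP ->];
      by rewrite ?addr0 ?add0r ?SD ?Su ?Sv ?eqxx ?orbT.
  - by move=> {}h {}k /andP [_ Shk]; rewrite inE Shk.
rewrite opprB; case/orP=> /cone /orP [-> //|]; rewrite ?orbT //.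
- by rewrite -oppr_eq0 opprB => ->; rewrite orbT.
- by move=> ->; rewrite orbT.
Qed.

End Sector.

Lemma tangent_center_neq i j : tangent c i j -> c j - c i != 0.
Proof.
case/andP=> ij _; rewrite subr_eq0; apply: contra ij => /eqP cji.
by rewrite (LS_center_inj cji).
Qed.

Lemma contact_number_le_sectors :
  (contact_number c <= #|[set ij : 'I_n * 'I_n | contact_in sector0 ij.1 ij.2]|
                     + #|[set ij : 'I_n * 'I_n | contact_in sector1 ij.1 ij.2]|)%N.
Proof.
pose oriented (ij : 'I_n * 'I_n) := sector0 (c ij.2 - c ij.1) || sector1 (c ij.2 - c ij.1).
pose orient (ij : 'I_n * 'I_n) := if oriented ij then ij else (ij.2, ij.1).
have orient_inj : {in [set ij : 'I_n * 'I_n | (ij.1 < ij.2)%N && tangent c ij.1 ij.2] &,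
                   injective orient}.
  move=> [i j] [i' j']; rewrite !inE /orient /= => /andP [lt_ij _] /andP [lt_ij' _].
  by case: ifP; case: ifP => _ _ [? ?]; subst; rewrite // ltnNge ltnW in lt_ij'.
rewrite /contact_number -(card_in_imset orient_inj).
apply: leq_trans (subset_leq_card _) (leq_card_setU _ _).
apply/subsetP => _ /imsetP [[i j] /[!inE] /andP [_ tij] ->].
rewrite /orient /oriented /contact_in /=; case: ifP => [/orP [->|->]|]; rewrite ?tij ?orbT //.
move/negbT; rewrite negb_or => /andP [/negPf S0 /negPf S1].
have := sectors_cover (tangent_center_neq tij); rewrite S0 S1 /= -tangentC tij opprB.
by case/orP=> ->; rewrite ?orbT.
Qed.

Lemma LS_sources_bound : exists a b : nat,
  (contact_number c + a + b <= 2 * n)%N /\ (n <= a * b)%N.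
Proof.
set E0 := [set ij : 'I_n * 'I_n | contact_in sector0 ij.1 ij.2].
set E1 := [set ij : 'I_n * 'I_n | contact_in sector1 ij.1 ij.2].
set S0 := [set s | source (contact_in sector0) s].
set S1 := [set s | source (contact_in sector1) s].
exists #|S0|, #|S1|; split.
  have E0S0 : (#|E0| + #|S0| <= #|'I_n|)%N.
    exact: card_edges_add_sources (contact_in_injective sector0_dot_gt0).
  have E1S1 : (#|E1| + #|S1| <= #|'I_n|)%N.
    exact: card_edges_add_sources (contact_in_injective sector1_dot_gt0).
  rewrite card_ord in E0S0 E1S1; rewrite -addnA.
  apply: leq_trans (leq_add contact_number_le_sectors (leqnn _)) _.
  by rewrite addnACA mul2n -addnn leq_add.
rewrite -[X in (X <= _)%N]card_ord.
apply: card_le_mul_sources (contact_in_functional sector0_dot_gt0)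
  (contact_in_functional sector1_dot_gt0) (contact_in_incr sector0_e1_gt0)
  (contact_in_incr sector1_e2_gt0) _.
move=> v w conn0 conn1; apply: LS_center_inj; apply/eqP; rewrite -subr_eq0; apply/eqP.
by apply: sector_cones_meet; [apply: (connect_contact_in_cone sector0D) |
  apply: (connect_contact_in_cone sector1D)].
Qed.

End LocallySeparablePacking.

Lemma two_sqrt_le_add (R : rcfType) (a b x : R) :
  0 <= a -> 0 <= b -> x <= a * b -> 2 * Num.sqrt x <= a + b.
Proof.
move=> a_ge0 b_ge0 x_le; have [x_lt0|x_ge0] := ltrP x 0.
  by rewrite ltr0_sqrtr // mulr0 addr_ge0.
rewrite -ler_sqr ?nnegrE ?addr_ge0 ?mulr_ge0 ?sqrtr_ge0 //.
by rewrite exprMn sqr_sqrtr //; have := sqr_ge0 (a - b); nra.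
Qed.

Lemma le_floor_two_sub_two_sqrt (R : realType) (m a b n : nat) :
  (m + a + b <= 2 * n)%N -> (n <= a * b)%N ->
  m%:Z <= Num.floor (2 * n%:R - 2 * Num.sqrt (n%:R : R)).
Proof.
move=> le_2n le_ab; rewrite floor_ge_int.
have : 2 * Num.sqrt (n%:R : R) <= a%:R + b%:R.
  by apply: two_sqrt_le_add; rewrite ?ler0n // -natrM ler_nat.
have : m%:R + a%:R + b%:R <= 2 * n%:R :> R.
  by rewrite -!natrD -[2 : R]/(2%:R) -natrM ler_nat.
move=> ? ?; rewrite -pmulrn; lra.
Qed.

Unset Implicit Arguments.

Theorem theorem2 (R : realType) (n : nat) (c : 'I_n -> R * R) :
  (1 < n)%N -> LS_packing c ->
  ((contact_number c)%:Z <= Num.floor (2 * n%:R - 2 * Num.sqrt (n%:R : R)))%R.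
Proof.
(* the bound holds for every n *)
move=> _ LS; have [a [b [le_2n le_ab]]] := LS_sources_bound LS.
exact: le_floor_two_sub_two_sqrt le_2n le_ab.
Qed.
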